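(* If $n=2p$ for a prime $p$, then $\pi\ge\lceil r/2\rceil(n-2q-m+1)$.
   Context: $G$ is a set of size $n$ and $G(\circ)$, $G(\ast)$ are distinct groups on $G$ with the same identity element. $\mathrm{diff}(\circ,\ast)=\{(a,b):a\circ b\ne a\ast b\}$, $\mathrm{dist}(\circ,\ast)=|\mathrm{diff}(\circ,\ast)|$, $\mathrm{dist}_a=|\{b:a\circ b\ne a\ast b\}|$; $H=\{a:\mathrm{dist}_a=0\}$, $h=|H|$; $K=\{a:\mathrm{dist}_a<n/3\}$, $k=|K|$; $m=\min\{\mathrm{dist}_a:\mathrm{dist}_a>0\}$. Standing assumption: $m\ge 3$. Let $q=\lceil n/3\rceil$ and the profit $\pi=\mathrm{dist}(\circ,\ast)-((k-h)m+(n-k)q)$. Let $R=\{(a,a)\in\mathrm{diff}(\circ,\ast):a\in K\}$, $r=|R|$. *)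

From mathcomp Require Import all_boot all_order all_algebra.
Set Implicit Arguments. Unset Strict Implicit. Unset Printing Implicit Defensive.

Section Defs.
Variable T : finType.

Definition is_group_law (op : T -> T -> T) (e : T) : Prop :=
  [/\ (forall a b c, op a (op b c) = op (op a b) c),
      (forall a, op e a = a /\ op a e = a)
    & (forall a, exists b, op a b = e /\ op b a = e)].

Variables (op1 op2 : T -> T -> T).

Definition diffset : {set T * T} := [set p | op1 p.1 p.2 != op2 p.1 p.2].
Definition dist : nat := #|diffset|.
Definition dista (a : T) : nat := #|[set b | op1 a b != op2 a b]|.
Definition Hset : {set T} := [set a | dista a == 0].
Definition hh : nat := #|Hset|.
(* K = {a : dist_a < n/3} ; with n = #|T|, dist_a < n/3 <-> 3 dist_a < n *)
Definition Kset : {set T} := [set a | 3 * dista a < #|T|].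
Definition kk : nat := #|Kset|.
(* m = min {dist_a : dist_a > 0}; the default #|T| is never attained
   as the minimum matters only when the set is nonempty (groups distinct),
   and every dist_a <= #|T|. *)
Definition mm : nat := \big[minn/#|T|]_(a | 0 < dista a) dista a.
Definition qq : nat := (#|T| + 2) %/ 3.
Definition profit : int :=
  (dist%:Z - ((kk%:Z - hh%:Z) * mm%:Z + (#|T|%:Z - kk%:Z) * qq%:Z))%R.
Definition Rset : {set T * T} := [set p in diffset | (p.1 == p.2) && (p.1 \in Kset)].
Definition rr : nat := #|Rset|.
End Defs.

From HB Require Import structures.
From mathcomp Require Import all_boot all_order all_algebra all_fingroup zify.
From mathcomp Require Import cyclic.
Import Order.TTheory.
Set Implicit Arguments. Unset Strict Implicit. Unset Printing Implicit Defensive.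

(* The profit is the sum over a of dist_a - w_a, where w_a is the share of a in
   the subtracted baseline (m on K \ H, q outside K); every term is nonnegative.
   Let a be in K with a o a <> a * a and put c = a o a. If c o x = c * x, then
   a o x <> a * x or a o (a o x) <> a * (a o x), for otherwise right cancellation
   in (G, * ) gives a o a = a * a. Hence dist_c >= n - 2 dist_a > n/3, so c lies
   outside K and a and c together contribute at least n + 1 - 2q - m to the
   profit. In a group of order 2p an element c <> 1 has at most two square
   roots, so at least ceil(r/2) distinct such squares c occur. *)

Section SquareRoots.
Local Open Scope group_scope.
Variable gT : finGroupType.

Lemma sqrt_in_cycle_2p (y z : gT) p : #[y] = (2 * p)%N -> y * y != 1 ->
  z \in <[y]> -> z * z = y * y -> z = y \/ z = y ^+ p.+1.
Proof.
move=> oy y2 /cyclePmin [k]; rewrite oy => lt_k_2p -> zz.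
have k_gt0 : (0 < k)%N.
  by rewrite lt0n; apply: contra_neq y2 => k0; rewrite -zz k0 expg0 mulg1.
have : y ^+ (2 * k.-1) = 1.
  apply: (mulIg (y ^+ 2)); rewrite -expgD mul1g.
  have -> : (2 * k.-1 + 2 = k + k)%N by lia.
  by rewrite expgD zz expgS expg1.
move/eqP; rewrite -order_dvdn oy => /dvdnP [j def_k].
have : (j < 2)%N by nia.
case: j def_k => [|[|//]] def_k _; [left; rewrite -[RHS]expg1 | right].
all: by congr (_ ^+ _); lia.
Qed.

Lemma expg_uphalf_sqr (x : gT) p : odd p -> x ^+ p = 1 -> (x * x) ^+ uphalf p = x.
Proof.
move=> p_odd xp; rewrite -expg2 -expgM.
have -> : (2 * uphalf p = p.+1)%N.
  by have := odd_double_half p; rewrite uphalf_half p_odd -addnn; lia.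
by rewrite expgSr xp mul1g.
Qed.

Variable p : nat.
Hypotheses (p_prime : prime p) (card_gT : #|gT| = (2 * p)%N).

Lemma order_2p (y : gT) : y ^+ 2 != 1 -> y ^+ p != 1 -> #[y] = (2 * p)%N.
Proof.
rewrite -!order_dvdn => ndvd_y_2 ndvd_y_p.
have dvd_y_2p : (#[y] %| 2 * p)%N by rewrite -card_gT -cardsT order_dvdG ?inE.
have [/dvdnP [j def_y] | ndvd_p_y] := boolP (p %| #[y])%N; last first.
  by rewrite Gauss_dvdl ?(negPf ndvd_y_2) // coprime_sym prime_coprime in dvd_y_2p.
have j_dvd_2 : (j %| 2)%N by rewrite -(dvdn_pmul2r (prime_gt0 p_prime)) -def_y.
case: j def_y j_dvd_2 => [|[|[|j]]] def_y j_dvd_2.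
- by have := order_gt0 y; rewrite def_y.
- by rewrite def_y mul1n dvdnn in ndvd_y_p.
- by rewrite def_y.
- by have := dvdn_leq (isT : 0 < 2)%N j_dvd_2.
Qed.

Lemma card_sqrt_2p (c : gT) : c != 1 -> (#|[set y | (y * y)%g == c]| <= 2)%N.
Proof.
move=> c1.
case: (pickP [pred y : gT | (y * y == c) && (y ^+ p != 1)]) => [y /andP [/eqP yy yp] | no_y].
  have yy1 : y * y != 1 by rewrite yy.
  have oy : #[y] = (2 * p)%N by apply: order_2p; rewrite ?expg2.
  have gen_y : <[y]> = [set: gT].
    by apply/eqP; rewrite eqEcard subsetT cardsT card_gT -oy leqnn.
  apply: (@leq_trans #|[set y; y ^+ p.+1]|); last by rewrite cards2; case: (_ != _).
  apply/subset_leq_card/subsetP => z; rewrite !inE => /eqP zz.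
  have z_in_y : z \in <[y]> by rewrite gen_y inE.
  by case: (sqrt_in_cycle_2p oy yy1 z_in_y (etrans zz (esym yy))) => ->; rewrite eqxx ?orbT.
(* Otherwise every square root z of c has z ^+ p = 1, which forces p odd and z = c ^+ uphalf p. *)
apply: (@leq_trans #|[set c ^+ uphalf p]|); last by rewrite cards1.
apply/subset_leq_card/subsetP => z; rewrite !inE => /eqP zz.
have /eqP zp : z ^+ p == 1 by move: (no_y z) => /=; rewrite zz eqxx => /negbFE.
have p_odd : odd p.
  have [p2 | //] := even_prime p_prime.
  by move: c1; rewrite -zz -expg2 -p2 zp eqxx.
by rewrite -zz expg_uphalf_sqr.
Qed.

End SquareRoots.

Section GroupLaw.
Variables (T : finType) (op : T -> T -> T) (e : T).
Hypothesis op_group : is_group_law op e.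

Lemma group_law_assoc : associative op.
Proof. by case: op_group. Qed.

Lemma group_law_mul1 : left_id e op.
Proof. by case: op_group => _ id_e _ a; case: (id_e a). Qed.

Lemma group_law_mulg1 : right_id e op.
Proof. by case: op_group => _ id_e _ a; case: (id_e a). Qed.

Lemma group_law_injl a : injective (op a).
Proof.
case: op_group => _ _ /(_ a) [b [_ ba]] x y eq_ax_ay.
by rewrite -[x]group_law_mul1 -[y]group_law_mul1 -ba -!group_law_assoc eq_ax_ay.
Qed.

Lemma group_law_injr a : injective (op^~ a).
Proof.
case: op_group => _ _ /(_ a) [b [ab _]] x y eq_xa_ya.
by rewrite -[x]group_law_mulg1 -[y]group_law_mulg1 -ab !group_law_assoc eq_xa_ya.
Qed.

Definition group_law_inv (a : T) : T := odflt a [pick b | op b a == e].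

Lemma group_law_mulVg : left_inverse e group_law_inv op.
Proof.
move=> a; rewrite /group_law_inv; case: pickP => [b /eqP // | no_inv].
by case: op_group => _ _ /(_ a) [b [_ ba]]; move: (no_inv b); rewrite /= ba eqxx.
Qed.

Definition group_of_law : Type := T.
HB.instance Definition _ := Finite.on group_of_law.
HB.instance Definition _ :=
  Finite_isGroup.Build group_of_law group_law_assoc group_law_mul1 group_law_mulVg.

Lemma card_sqrt_group_law_2p p c : prime p -> #|T| = (2 * p)%N -> c != e ->
  #|[set y | op y y == c]| <= 2.
Proof.
move=> p_prime card_T c_neq_e.
pose to_T (x : group_of_law) : T := x.
have to_T_inj : injective to_T by [].
have to_T_onto : to_T @: [set: group_of_law] = [set: T].
  by apply/setP => x; rewrite inE; apply/imsetP; exists x.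
have card_G : #|[set: group_of_law]| = (2 * p)%N.
  by rewrite -(card_imset _ to_T_inj) to_T_onto cardsT.
have -> : [set y | op y y == c] = to_T @: [set y : group_of_law | (y * y)%g == c].
  apply/setP => x; rewrite inE; apply/idP/imsetP => [sq_x | [y]]; first by exists x; rewrite ?inE.
  by rewrite inE => sq_y ->.
rewrite card_imset //; apply: (@card_sqrt_2p group_of_law p p_prime _ c c_neq_e).
by rewrite -cardsT.
Qed.

End GroupLaw.

Lemma sum_nat_mem (T : finType) (A : {set T}) c : \sum_a c * (a \in A) = #|A| * c.
Proof.
rewrite -sum_nat_const [RHS]big_mkcond; apply: eq_bigr => a _.
by case: (a \in A); rewrite ?muln1 ?muln0.
Qed.

Section Profit.
Variables (T : finType) (op1 op2 : T -> T -> T) (e : T).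
Hypotheses (G1 : is_group_law op1 e) (G2 : is_group_law op2 e).

Local Notation n := #|T|.
Local Notation d := (dista op1 op2).
Local Notation K := (Kset op1 op2).
Local Notation H := (Hset op1 op2).
Local Notation m := (mm op1 op2).
Local Notation q := (qq T).

Lemma dist_sum_dista : dist op1 op2 = \sum_a d a.
Proof.
rewrite /dist -sum1_card (partition_big fst xpredT) //=; apply: eq_bigr => a _.
rewrite /dista -sum1_card (reindex (pair a)) /=; last first.
  by exists snd => [b _ | [a' b] /andP [_ /eqP <-]].
by apply: eq_bigl => b; rewrite !inE eqxx andbT.
Qed.

Lemma dista_e : d e = 0.
Proof.
apply/eqP; rewrite cards_eq0; apply/eqP/setP => b.
by rewrite !inE (group_law_mul1 G1) (group_law_mul1 G2) eqxx.
Qed.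

Lemma mm_le_dista a : 0 < d a -> m <= d a.
Proof. by move=> da_gt0; rewrite /mm -minEnat -leEnat; apply: bigmin_le_cond. Qed.

Lemma dista_sqr_lb a : op1 a a != op2 a a -> n <= d (op1 a a) + 2 * d a.
Proof.
move=> sq_a; set c := op1 a a; pose S x := [set b | op1 x b != op2 x b].
have cover : ~: S c \subset S a :|: op1 a @^-1: S a.
  apply/subsetP => x; rewrite !inE negbK => /eqP cx.
  apply: contraR sq_a; rewrite negb_or !negbK => /andP [/eqP ax /eqP aax].
  apply/eqP; apply: (group_law_injr G2 (a := x)).
  by rewrite /= -cx /c -(group_law_assoc G1) aax ax (group_law_assoc G2).
have := leq_trans (subset_leq_card cover) (leq_card_setU _ _).
rewrite card_preimset; last exact: group_law_injl G1 a.
by have := cardsC (S c); rewrite /S /dista; lia.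
Qed.

Lemma H_sub_K : H \subset K.
Proof.
apply/subsetP => a; rewrite !inE => /eqP ->; rewrite muln0.
by apply/card_gt0P; exists a.
Qed.

Definition weight a := m * (a \in K :\: H) + q * (a \notin K).

Lemma sum_weight :
  \sum_a weight a = (kk op1 op2 - hh op1 op2) * m + (n - kk op1 op2) * q.
Proof.
rewrite big_split /=.
under [X in _ + X]eq_bigr do rewrite -in_setC.
rewrite !sum_nat_mem cardsD (setIidPr H_sub_K); congr (_ + _ * _).
by rewrite cardsCs setCK.
Qed.

Lemma weight_le_dista a : weight a <= d a.
Proof.
rewrite /weight !inE; case: (boolP (3 * d a < n)) => a_K /=.
  rewrite andbT muln0 addn0 -lt0n.
  by case: (posnP (d a)) => [-> | /mm_le_dista m_le]; rewrite ?muln0 ?muln1.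
by rewrite andbF muln0 muln1 /qq; lia.
Qed.

Lemma profit_sum_excess : (profit op1 op2 = (\sum_a (d a - weight a))%N%:Z)%R.
Proof.
have dist_split : dist op1 op2 = \sum_a weight a + \sum_a (d a - weight a).
  by rewrite dist_sum_dista -big_split; apply: eq_bigr => a _; rewrite /= subnKC ?weight_le_dista.
have hk : hh op1 op2 <= kk op1 op2 by apply: subset_leq_card H_sub_K.
have kn : kk op1 op2 <= n by apply: max_card.
by rewrite /profit dist_split sum_weight; nia.
Qed.

Definition Rdiag := [set a in K | op1 a a != op2 a a].
Definition Rsq := [set op1 a a | a in Rdiag].

Lemma rr_card_Rdiag : rr op1 op2 = #|Rdiag|.
Proof.
rewrite /rr; suff -> : Rset op1 op2 = [set (a, a) | a in Rdiag].
  by rewrite card_imset // => a a' [].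
apply/setP => -[a b]; rewrite !inE /=; apply/idP/imsetP => [| [a' a'_R [-> ->]]].
  case/and3P => sq_a /eqP eq_ab a_K; subst b.
  by exists a; rewrite // !inE a_K.
by move: a'_R; rewrite !inE eqxx => /andP [-> ->].
Qed.

Lemma Rdiag_dista a : a \in Rdiag -> [/\ 3 * d a < n, n < 3 * d (op1 a a) & 0 < d a].
Proof.
rewrite !inE => /andP [a_K sq_a]; have := dista_sqr_lb sq_a.
split; [done | lia |].
by rewrite lt0n cards_eq0; apply/set0Pn; exists a; rewrite inE.
Qed.

Lemma Rsq_notin_K c : c \in Rsq -> c \notin K.
Proof. by case/imsetP => a /Rdiag_dista [_ + _] ->; rewrite inE -leqNgt => /ltnW. Qed.

Lemma excess_Rsq c : c \in Rsq -> d c - weight c = d c - q.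
Proof. by move/Rsq_notin_K => c_notK; rewrite /weight inE (negPf c_notK) andbF muln0 muln1. Qed.

Lemma excess_Rdiag a : a \in Rdiag -> d a - weight a = d a - m.
Proof.
move=> a_R; have [a_K _ da_gt0] := Rdiag_dista a_R.
by rewrite /weight !inE a_K -lt0n da_gt0 /= muln1 muln0 addn0.
Qed.

Lemma excess_pair a : a \in Rdiag -> n + 1 - (2 * q + m) <= (d (op1 a a) - q) + (d a - m).
Proof.
move=> a_R; have [a_K _ _] := Rdiag_dista a_R.
by move: a_R; rewrite inE => /andP [_ /dista_sqr_lb]; rewrite /qq; lia.
Qed.

Lemma excess_lb : #|Rsq| * (n + 1 - (2 * q + m)) <= \sum_a (d a - weight a).
Proof.
have disj : [disjoint Rsq & Rdiag].
  rewrite disjoints_subset; apply/subsetP => c /Rsq_notin_K c_notK.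
  by rewrite in_setC; apply: contra c_notK => /setIdP [].
apply: (@leq_trans (\sum_(a in [predU Rsq & Rdiag]) (d a - weight a))); last first.
  exact: (sub_le_big leqnn (fun x y => leq_addr y x)).
rewrite bigU //= (eq_bigr _ excess_Rsq) (eq_bigr _ excess_Rdiag).
rewrite (partition_big_imset (fun a => op1 a a) (mem Rdiag)) -/Rsq -big_split -sum_nat_const /=.
apply: leq_sum => _ /imsetP [a a_R ->].
rewrite (bigD1 a) /=; last by rewrite a_R eqxx.
by rewrite addnA (leq_trans (excess_pair a_R)) ?leq_addr.
Qed.

Lemma card_Rdiag_le p : prime p -> n = (2 * p)%N -> #|Rdiag| <= 2 * #|Rsq|.
Proof.
move=> p_prime card_T.
rewrite -sum1_card (partition_big_imset (fun a => op1 a a) (mem Rdiag)) -/Rsq.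
rewrite mulnC -sum_nat_const; apply: leq_sum => _ /imsetP [a a_R ->].
have sq_neq_e : op1 a a != e.
  by have [_ lt_sq _] := Rdiag_dista a_R; apply: contraTneq lt_sq => ->; rewrite dista_e.
apply: leq_trans (card_sqrt_group_law_2p G1 p_prime card_T sq_neq_e).
by rewrite sum1_card; apply/subset_leq_card/subsetP => x; rewrite !inE => /andP [_ ->].
Qed.
End Profit.

Local Open Scope ring_scope.

Lemma le_mul_truncated_sub (h c a b s : nat) :
  (h <= c)%N -> (c * (a - b) <= s)%N -> h%:Z * (a%:Z - b%:Z) <= s%:Z.
Proof. by move=> h_le_c; case: (leqP b a) => _; nia. Qed.

Theorem lemma9p3 (T : finType) (op1 op2 : T -> T -> T) (e : T) (p : nat) :
  is_group_law op1 e -> is_group_law op2 e ->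
  (exists a b, op1 a b <> op2 a b) ->
  (3 <= mm op1 op2)%N ->
  prime p -> #|T| = (2 * p)%N ->
  ((((rr op1 op2 + 1) %/ 2)%N)%:Z *
     (#|T|%:Z - 2 * (qq T)%:Z - (mm op1 op2)%:Z + 1)
   <= profit op1 op2).
Proof.
move=> G1 G2 _ _ p_prime card_T.
have half_le : ((#|Rdiag op1 op2| + 1) %/ 2 <= #|Rsq op1 op2|)%N.
  by have := card_Rdiag_le G1 G2 p_prime card_T; lia.
rewrite profit_sum_excess rr_card_Rdiag.
have -> : #|T|%:Z - 2 * (qq T)%:Z - (mm op1 op2)%:Z + 1 =
          (#|T| + 1)%N%:Z - (2 * qq T + mm op1 op2)%N%:Z by lia.
exact: le_mul_truncated_sub half_le (excess_lb G1 G2).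
Qed.
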